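(* Let $\mathcal{K}$ be a connected simplicial complex, $(Z,d_Z)$ a metric space and $F:\mathrm{vert}(\mathcal{K})\to Z$ a function. Then the $F$-induced distance $d_F$ is a path-dominated distance function.
   Context: The $F$-induced distance is $d_F(x,y)=\min_{\pi}\max_{u\in\pi}d_Z(F(x),F(u))$, the minimum over all paths $\pi$ in the $1$-skeleton of $\mathcal{K}$ from $x$ to $y$. A function $d:\mathrm{vert}(\mathcal{K})\times\mathrm{vert}(\mathcal{K})\to\mathbb{R}_{\ge0}$ is path-dominated if (i) $d(x,y)\ge0$ and $d(x,x)=0$ for all vertices, and (ii) for any vertices $x,y$ there is a path $\pi^*$ from $x$ to $y$ in the $1$-skeleton with $d(x,y)=\max_{u\in\mathrm{vert}(\pi^* )}d(x,u)$. *)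

From HB Require Import structures.
From mathcomp Require Import all_boot all_order all_algebra.
From mathcomp Require Import classical_sets reals.
Set Implicit Arguments. Unset Strict Implicit. Unset Printing Implicit Defensive.
Import Order.TTheory GRing.Theory Num.Theory.
Local Open Scope ring_scope.

(* A (finite, abstract) simplicial complex on the vertex set V:
   a family of nonempty finite subsets closed under taking nonempty subsets,
   and every element of V is a vertex (so vert(K) = V). *)
Definition is_simplicial_complex (V : finType) (K : {set {set V}}) : Prop :=
  [/\ (finset.set0 : {set V}) \notin K,
      (forall s t : {set V}, s \in K -> t \subset s -> t != finset.set0 -> t \in K)
    & (forall v : V, [set v] \in K)].

Definition skel1 (V : finType) (K : {set {set V}}) : rel V :=
  fun x y => (x != y) && ([set x; y] \in K).

(* x :: p is a path in the 1-skeleton from x to y; its vertices are x :: p. *)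
Definition Kpath (V : finType) (K : {set {set V}}) (x : V) (p : seq V) (y : V)
  : Prop := path (skel1 K) x p /\ last x p = y.

Definition Kconnected (V : finType) (K : {set {set V}}) : Prop :=
  forall x y : V, exists p, Kpath K x p y.

(* maximum of f over the vertices x :: p of a path (f is nonnegative in use) *)
Definition pmax (R : realType) (V : Type) (f : V -> R) (x : V) (p : seq V) : R :=
  \big[Num.max/0]_(u <- x :: p) f u.

Definition is_metric (R : realType) (Z : Type) (dZ : Z -> Z -> R) : Prop :=
  [/\ forall a b, 0 <= dZ a b,
      forall a b, dZ a b = 0 <-> a = b,
      forall a b, dZ a b = dZ b a
    & forall a b c, dZ a c <= dZ a b + dZ b c].

Local Open Scope classical_set_scope.

(* The F-induced distance: min (taken as inf) over paths of the max of
   d_Z(F x, F u) over the vertices u of the path. *)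
Definition dF (R : realType) (V : finType) (Z : Type) (K : {set {set V}})
  (dZ : Z -> Z -> R) (F : V -> Z) (x y : V) : R :=
  inf [set pmax (fun u => dZ (F x) (F u)) x p | p in [set p | Kpath K x p y]].

Definition path_dominated (R : realType) (V : finType) (K : {set {set V}})
  (d : V -> V -> R) : Prop :=
  [/\ forall x y, 0 <= d x y,
      forall x, d x x = 0
    & forall x y, exists p, Kpath K x p y /\ d x y = pmax (d x) x p].

From mathcomp Require Import all_boot all_order all_algebra.
From mathcomp Require Import boolp classical_sets reals.
Import Order.TTheory GRing.Theory Num.Theory.

(* The cost max_{u in x :: p} d_Z(F x, F u) of a path takes only finitely many
   values, so the infimum defining d_F is attained by some path p from x to y.
   Every vertex u of p is reached from x by a prefix of p, whose cost bounds
   d_F(x, u) by d_F(x, y); and y itself lies on p.  Only connectedness and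
   d_Z(a, a) = 0 are used, so the argument is run for an arbitrary weight
   w x u in place of d_Z(F x, F u). *)

Local Open Scope ring_scope.
Local Open Scope classical_set_scope.

Section PathMax.
Set Implicit Arguments. Unset Strict Implicit.
Variable R : realType.

Lemma pmax_ge0 (V : Type) (f : V -> R) x p : 0 <= pmax f x p.
Proof. exact: bigmax_ge_id. Qed.

Lemma le_pmax (V : eqType) (f : V -> R) x p u :
  u \in x :: p -> f u <= pmax f x p.
Proof. by move=> u_p; apply: le_bigmax_seq. Qed.

Lemma pmax_le (V : eqType) (f : V -> R) x p c :
  0 <= c -> (forall u, u \in x :: p -> f u <= c) -> pmax f x p <= c.
Proof. by rewrite /pmax big_seq; apply: bigmax_le. Qed.

Lemma pmax_subset (V : eqType) (f : V -> R) x p q :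
  {subset x :: q <= x :: p} -> pmax f x q <= pmax f x p.
Proof.
move=> sub_qp; apply: pmax_le => [|u u_q]; first exact: pmax_ge0.
by apply: le_pmax; apply: sub_qp.
Qed.

Lemma pmax_in_codom (V : finType) (f : V -> R) x p :
  pmax f x p \in 0 :: codom f.
Proof.
rewrite /pmax; elim/big_ind: _ => [|a b a_in b_in|u _]; first exact: mem_head.
- by rewrite maxEle; case: ifP.
- by rewrite inE codom_f orbT.
Qed.

Lemma inf_in_sub_seq (S : set R) (s : seq R) :
  S !=set0 -> S `<=` [set a | a \in s] -> S (inf S).
Proof.
move=> [a0 Sa0] sub_Ss.
pose m := \big[Num.min/a0]_(b <- s | `[< S b >]) b.
have Sm : S m.
  rewrite /m; elim/big_ind: _ => // [a b Sa Sb|b /asboolP //].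
  by rewrite minEle; case: ifP.
have m_lb : lbound S m.
  by move=> b Sb; apply: ge_bigmin_seq; [exact: sub_Ss | exact/asboolP].
suff -> : inf S = m by [].
apply/le_anti/andP; split; first by apply: ge_inf => //; exists m.
by apply: lb_le_inf => //; exists a0.
Qed.

End PathMax.

Section MinimaxDistance.
Set Implicit Arguments. Unset Strict Implicit.
Variables (R : realType) (V : finType) (K : {set {set V}}) (w : V -> V -> R).

Lemma Kpath_prefix x p y u :
  Kpath K x p y -> u \in x :: p ->
  exists2 q, Kpath K x q u & {subset x :: q <= x :: p}.
Proof.
move=> [xp _] u_p; case/splitPl: p / u_p xp => q r last_q.
rewrite cat_path => /andP[xq _]; exists q => // v.
by rewrite !inE mem_cat => /orP[->|->]; rewrite ?orbT.
Qed.

Definition minimax (x y : V) : R :=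
  inf [set pmax (w x) x p | p in [set p | Kpath K x p y]].

Lemma minimax_le_pmax x p y : Kpath K x p y -> minimax x y <= pmax (w x) x p.
Proof.
move=> pxy; apply: ge_inf; last by exists p.
by exists 0 => _ [q _ <-]; apply: pmax_ge0.
Qed.

Hypothesis K_connected : Kconnected K.

Lemma minimax_attained x y :
  exists2 p, Kpath K x p y & minimax x y = pmax (w x) x p.
Proof.
have [p pxy] := K_connected x y.
pose S := [set pmax (w x) x q | q in [set q | Kpath K x q y]].
have : S (inf S).
  apply: (@inf_in_sub_seq _ _ (0 :: codom (w x))).
  - by exists (pmax (w x) x p), p.
  - by move=> _ [q _ <-]; apply: pmax_in_codom.
by case=> q qxy inf_q; exists q.
Qed.

Lemma minimax_ge0 x y : 0 <= minimax x y.
Proof. by have [p _ ->] := minimax_attained x y; apply: pmax_ge0. Qed.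

Lemma minimax_path_dominated :
  (forall x, w x x = 0) -> path_dominated K minimax.
Proof.
move=> w_refl; split=> [x y|x|x y]; first exact: minimax_ge0.
  have x_path : Kpath K x [::] x by split.
  apply/le_anti; rewrite minimax_ge0 andbT.
  apply: le_trans (minimax_le_pmax x_path) _.
  by apply: pmax_le => // u; rewrite mem_seq1 => /eqP ->; rewrite w_refl.
have [p pxy Ep] := minimax_attained x y; exists p; split=> //.
apply/le_anti/andP; split; first by case: pxy => _ <-; apply/le_pmax/mem_last.
rewrite Ep; apply: pmax_le => [|u u_p]; first exact: pmax_ge0.
have [q qxu sub_qp] := Kpath_prefix pxy u_p.
exact: le_trans (minimax_le_pmax qxu) (pmax_subset _ sub_qp).
Qed.

End MinimaxDistance.

Theorem claim3 (R : realType) (V : finType) (K : {set {set V}})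
  (Z : Type) (dZ : Z -> Z -> R) (F : V -> Z) :
  is_simplicial_complex K -> Kconnected K -> is_metric dZ ->
  path_dominated K (dF K dZ F).
Proof.
move=> _ K_connected [_ dZ_eq0 _ _].
apply: (minimax_path_dominated K_connected) => x.
exact/dZ_eq0.
Qed.
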